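(* For every integer $n\ge0$, the real vector space $\operatorname{Infr}_n$ of inframonogenic homogeneous polynomials of degree $n$ has dimension $6n+3$ over $\mathbb{R}$.
   Context: $\mathbb{H}$ denotes the real quaternions with basis $e_0=1,e_1,e_2,e_3$ and $e_1^2=e_2^2=e_3^2=e_1e_2e_3=-1$; $\mathbb{R}^3$ is identified with the reduced quaternions $x_0+x_1e_1+x_2e_2$. $\operatorname{Infr}_n$ is the set of functions $f=f_0+f_1e_1+f_2e_2$ where each $f_i$ is a real homogeneous polynomial of degree $n$ in $x_0,x_1,x_2$, such that $\overline{\partial} f\overline{\partial}=0$. Here, with $\partial_i=\partial/\partial x_i$, $\overline{\partial} g=\partial_0 g+e_1\partial_1 g+e_2\partial_2 g$ (left action), $g\overline{\partial}=\partial_0 g+(\partial_1 g)e_1+(\partial_2 g)e_2$ (right action), and $\overline{\partial} f\overline{\partial}:=\overline{\partial}(f\overline{\partial})$. *)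

From HB Require Import structures.
From mathcomp Require Import all_boot all_order all_algebra.
From mathcomp Require Import mpoly.
From mathcomp Require Import reals.

Set Implicit Arguments.
Unset Strict Implicit.
Unset Printing Implicit Defensive.

Import Order.TTheory GRing.Theory Num.Theory.
Local Open Scope ring_scope.

(* q = q0 + q1 e1 + q2 e2 + q3 e3, with Hamilton's rules               *)
(* e1^2 = e2^2 = e3^2 = e1 e2 e3 = -1.                                 *)
Record quat (P : Type) := Quat { q0 : P; q1 : P; q2 : P; q3 : P }.
Arguments Quat {P}.

Section Quaternions.
Variable P : comNzRingType.

Definition qadd (a b : quat P) : quat P :=
  Quat (q0 a + q0 b) (q1 a + q1 b) (q2 a + q2 b) (q3 a + q3 b).

Definition qmul (a b : quat P) : quat P :=
  Quat (q0 a * q0 b - q1 a * q1 b - q2 a * q2 b - q3 a * q3 b)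
       (q0 a * q1 b + q1 a * q0 b + q2 a * q3 b - q3 a * q2 b)
       (q0 a * q2 b - q1 a * q3 b + q2 a * q0 b + q3 a * q1 b)
       (q0 a * q3 b + q1 a * q2 b - q2 a * q1 b + q3 a * q0 b).

Definition qzero : quat P := Quat 0 0 0 0.
Definition qe1 : quat P := Quat 0 1 0 0.
Definition qe2 : quat P := Quat 0 0 1 0.

Definition qmap (h : P -> P) (a : quat P) : quat P :=
  Quat (h (q0 a)) (h (q1 a)) (h (q2 a)) (h (q3 a)).
End Quaternions.

Section Infr.
Variable R : reals.Real.type.

Definition var0 : 'I_3 := @Ordinal 3 0 isT.
Definition var1 : 'I_3 := @Ordinal 3 1 isT.
Definition var2 : 'I_3 := @Ordinal 3 2 isT.

Local Notation Pol := {mpoly (R)[3]}.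

Definition pd (i : 'I_3) (p : Pol) : Pol := mderiv i p.

Definition dbar_left (g : quat Pol) : quat Pol :=
  qadd (qmap (pd var0) g)
       (qadd (qmul (qe1 Pol) (qmap (pd var1) g))
             (qmul (qe2 Pol) (qmap (pd var2) g))).

Definition dbar_right (g : quat Pol) : quat Pol :=
  qadd (qmap (pd var0) g)
       (qadd (qmul (qmap (pd var1) g) (qe1 Pol))
             (qmul (qmap (pd var2) g) (qe2 Pol))).

Definition quat_of_triple (f : Pol * Pol * Pol) : quat Pol :=
  Quat f.1.1 f.1.2 f.2 0.

Definition Infr (n : nat) (f : Pol * Pol * Pol) : Prop :=
  [/\ f.1.1 \is n.-homog, f.1.2 \is n.-homog, f.2 \is n.-homog
    & dbar_left (dbar_right (quat_of_triple f)) = qzero Pol].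
End Infr.

Definition is_subspace (K : pzRingType) (V : lmodType K) (S : V -> Prop) :=
  S 0 /\ forall (a : K) (u v : V), S u -> S v -> S (a *: u + v).

Definition has_dim (K : pzRingType) (V : lmodType K) (S : V -> Prop) (d : nat) :=
  exists b : 'I_d -> V,
    [/\ forall i, S (b i),
        (forall c : 'I_d -> K, \sum_(i < d) c i *: b i = 0 -> forall i, c i = 0)
      & forall v, S v -> exists c : 'I_d -> K, v = \sum_(i < d) c i *: b i].

(* Write f = f0 + f1 e1 + f2 e2. As partial derivatives commute, dbar f dbar has
   no e3-part, and its other three parts are second-order operators containing
   d0^2 f0, d0^2 f1 and d0^2 f2 respectively. Comparing coefficients, the part of
   a solution of x0-degree x+2 is determined by its parts of x0-degree x and x+1,
   and every choice of the two lowest x0-levels extends to a solution. Hence an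
   element of Infr_n is freely and uniquely determined by the coefficients of its
   three components at the 2n+1 monomials of degree n in which x0 occurs at most
   once, and these 3(2n+1) = 6n+3 coefficient functionals form a dual basis. *)

From mathcomp Require Import all_boot all_algebra.
From mathcomp Require Import ring zify.
From mathcomp Require Import mpoly.
From mathcomp Require Import reals.

Set Implicit Arguments.
Unset Strict Implicit.
Unset Printing Implicit Defensive.

Import GRing.Theory Num.Theory.
Local Open Scope ring_scope.

Section DualBasis.
Variables (K : pzRingType) (V : lmodType K) (S : V -> Prop).
Hypothesis subS : is_subspace S.

Lemma subspace_sum (J : Type) (r : seq J) (c : J -> K) (b : J -> V) :
  (forall j, S (b j)) -> S (\sum_(j <- r) c j *: b j).
Proof.
case: subS => S0 SD S_b; elim/big_rec: _ => // j v _ Sv.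
by rewrite -[v]add0r addrA addr0; apply: SD.
Qed.

Variables (I : finType) (coord : V -> I -> K) (b : I -> V).
Hypotheses (coordZD : forall a u v i,
              coord (a *: u + v) i = a * coord u i + coord v i)
           (coord_b : forall i j, coord (b i) j = (i == j)%:R)
           (Sb : forall i, S (b i))
           (coord_inj : forall v, S v -> (forall i, coord v i = 0) -> v = 0).

Lemma coord0 i : coord 0 i = 0.
Proof.
have := coordZD 1 0 0 i; rewrite scale1r addr0 mul1r -{1}[coord 0 i]addr0.
by move/addrI.
Qed.

Lemma coord_sum (J : Type) (r : seq J) (c : J -> K) (e : J -> V) i :
  coord (\sum_(j <- r) c j *: e j) i = \sum_(j <- r) c j * coord (e j) i.
Proof.
by elim: r => [|j r IH]; rewrite ?big_nil ?coord0 // !big_cons coordZD IH.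
Qed.

Lemma coord_basis_sum (J : finType) (e : J -> I) (c : J -> K) j :
  injective e -> \sum_j' c j' * coord (b (e j')) (e j) = c j.
Proof.
move=> e_inj; rewrite (bigD1 j) //= coord_b eqxx mulr1 big1 ?addr0 // => j' j'j.
by rewrite coord_b (inj_eq e_inj) (negbTE j'j) mulr0.
Qed.

Lemma dual_basis_has_dim : has_dim S #|I|.
Proof.
exists (b \o enum_val); split=> [i|c c0 i|v Sv]; first exact: Sb.
  have := congr1 (coord^~ (enum_val i)) c0.
  by rewrite coord_sum coord0 coord_basis_sum //; apply: enum_val_inj.
exists (fun i => coord v (enum_val i)).
apply/eqP; rewrite -subr_eq0; apply/eqP/coord_inj => [|i].
  case: subS => _ SD; rewrite addrC -scaleN1r; apply: SD => //.
  by apply: subspace_sum => i; apply: Sb.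
have := coord_basis_sum (fun j => coord v (enum_val j)) (enum_rank i) enum_val_inj.
rewrite enum_rankK -scaleN1r addrC coordZD coord_sum /= => ->.
by rewrite mulN1r addNr.
Qed.
End DualBasis.

Section Recurrence.
Variable R : numFieldType.

(* [p y z] is the coefficient of x1^y x2^z within one x0-level; triples of slices
   hold the three components. *)
Definition slice := nat -> nat -> R.

(* The coefficient of x0^x x1^y x2^z in [sandwich_k f] is (x+1)(x+2) times the
   level x+2 of f minus [sandwich_rhs x] of its levels x and x+1
   ([coef3_sandwich]). *)
Definition sandwich_rhs (x : nat) (p q : slice * slice * slice) :
    slice * slice * slice :=
  (fun y z => (y.+1 * y.+2)%:R * p.1.1 y.+2 z + (z.+1 * z.+2)%:R * p.1.1 y z.+2
     + ((x.+1 * y.+1)%:R * q.1.2 y.+1 z + (x.+1 * z.+1)%:R * q.2 y z.+1) *+ 2,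
   fun y z => (y.+1 * y.+2)%:R * p.1.2 y.+2 z - (z.+1 * z.+2)%:R * p.1.2 y z.+2
     + ((y.+1 * z.+1)%:R * p.2 y.+1 z.+1 - (x.+1 * y.+1)%:R * q.1.1 y.+1 z) *+ 2,
   fun y z => (z.+1 * z.+2)%:R * p.2 y z.+2 - (y.+1 * y.+2)%:R * p.2 y.+2 z
     + ((y.+1 * z.+1)%:R * p.1.2 y.+1 z.+1 - (x.+1 * z.+1)%:R * q.1.1 y z.+1) *+ 2).

Definition sandwich_rec (A : nat -> slice * slice * slice) : Prop :=
  forall x y z, let r := sandwich_rhs x (A x) (A x.+1) in
  [/\ (x.+1 * x.+2)%:R * (A x.+2).1.1 y z = r.1.1 y z,
      (x.+1 * x.+2)%:R * (A x.+2).1.2 y z = r.1.2 y z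
    & (x.+1 * x.+2)%:R * (A x.+2).2 y z = r.2 y z].

Definition vanishes (p : slice * slice * slice) : Prop :=
  [/\ forall y z, p.1.1 y z = 0, forall y z, p.1.2 y z = 0 & forall y z, p.2 y z = 0].

Lemma sandwich_rhs_vanishes x p q :
  vanishes p -> vanishes q -> vanishes (sandwich_rhs x p q).
Proof.
case=> p0 p1 p2 [q0 q1 q2]; split=> y z /=;
  by rewrite ?(p0, p1, p2, q0, q1, q2) !(mulr0, addr0, subr0, mul0rn).
Qed.

Lemma natr_pair_neq0 x : ((x.+1 * x.+2)%:R : R) != 0.
Proof. by rewrite pnatr_eq0 muln_eq0. Qed.

Lemma sandwich_rec_vanishes A : sandwich_rec A ->
  vanishes (A 0) -> vanishes (A 1) -> forall x, vanishes (A x).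
Proof.
move=> recA A0 A1.
suff VV x : vanishes (A x) /\ vanishes (A x.+1) by move=> x; case: (VV x).
elim: x => [|x [Ax Ax1]]; split=> //.
have [r0 r1 r2] := sandwich_rhs_vanishes x Ax Ax1.
have N0 := natr_pair_neq0 x.
split=> y z; have [] := recA x y z; rewrite r0 r1 r2 => /eqP + /eqP + /eqP;
  by rewrite !mulf_eq0 !(negbTE N0) /= => /eqP ? /eqP ? /eqP.
Qed.

Definition sandwich_next (x : nat) (p q : slice * slice * slice) :
    slice * slice * slice :=
  let c := ((x.+1 * x.+2)%:R)^-1 in let r := sandwich_rhs x p q in
  (fun y z => c * r.1.1 y z, fun y z => c * r.1.2 y z, fun y z => c * r.2 y z).

Fixpoint sandwich_levels (p q : slice * slice * slice) (x : nat) :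
    (slice * slice * slice) * (slice * slice * slice) :=
  if x is x'.+1 then
    let s := sandwich_levels p q x' in (s.2, sandwich_next x' s.1 s.2)
  else (p, q).

Definition sandwich_sol p q (x : nat) := (sandwich_levels p q x).1.

Lemma sandwich_solSS p q x :
  sandwich_sol p q x.+2 = sandwich_next x (sandwich_sol p q x) (sandwich_sol p q x.+1).
Proof. by []. Qed.

Lemma sandwich_sol_rec p q : sandwich_rec (sandwich_sol p q).
Proof.
move=> x y z; rewrite (sandwich_solSS p q x).
move: (sandwich_sol p q x) (sandwich_sol p q x.+1) => a b.
by split; apply: mulVKf; apply: natr_pair_neq0.
Qed.
End Recurrence.

Section Sandwich.
Variable R : reals.Real.type.
Local Notation Pol := {mpoly R[3]}.

Definition sandwich0 (f : Pol * Pol * Pol) : Pol :=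
  f.1.1^`M(var0)^`M(var0) - f.1.1^`M(var1)^`M(var1) - f.1.1^`M(var2)^`M(var2)
  - (f.1.2^`M(var1)^`M(var0) + f.2^`M(var2)^`M(var0)) *+ 2.
Definition sandwich1 (f : Pol * Pol * Pol) : Pol :=
  f.1.2^`M(var0)^`M(var0) - f.1.2^`M(var1)^`M(var1) + f.1.2^`M(var2)^`M(var2)
  + (f.1.1^`M(var1)^`M(var0) - f.2^`M(var2)^`M(var1)) *+ 2.
Definition sandwich2 (f : Pol * Pol * Pol) : Pol :=
  f.2^`M(var0)^`M(var0) + f.2^`M(var1)^`M(var1) - f.2^`M(var2)^`M(var2)
  + (f.1.1^`M(var2)^`M(var0) - f.1.2^`M(var2)^`M(var1)) *+ 2.

Lemma dbar_rightE (a b c : Pol) : dbar_right (Quat a b c 0) =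
  Quat (a^`M(var0) - b^`M(var1) - c^`M(var2)) (b^`M(var0) + a^`M(var1))
       (c^`M(var0) + a^`M(var2)) (b^`M(var2) - c^`M(var1)).
Proof.
rewrite /dbar_right /qadd /qmul /qmap /pd /qe1 /qe2; cbn [q0 q1 q2 q3].
by rewrite mderiv0; congr Quat; ring.
Qed.

Lemma dbar_leftE (a b c d : Pol) : dbar_left (Quat a b c d) =
  Quat (a^`M(var0) - b^`M(var1) - c^`M(var2)) (b^`M(var0) + a^`M(var1) + d^`M(var2))
       (c^`M(var0) - d^`M(var1) + a^`M(var2)) (d^`M(var0) + c^`M(var1) - b^`M(var2)).
Proof.
rewrite /dbar_left /qadd /qmul /qmap /pd /qe1 /qe2; cbn [q0 q1 q2 q3].
by congr Quat; ring.
Qed.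

Lemma dbar_sandwichE f : dbar_left (dbar_right (quat_of_triple f)) =
  Quat (sandwich0 f) (sandwich1 f) (sandwich2 f) 0.
Proof.
rewrite dbar_rightE dbar_leftE !(mderivD, mderivB, mderivN).
rewrite ![(_^`M(var0))^`M(var1)]mderiv_comm ![(_^`M(var0))^`M(var2)]mderiv_comm.
rewrite ![(_^`M(var1))^`M(var2)]mderiv_comm.
by rewrite /sandwich0 /sandwich1 /sandwich2; congr Quat; ring.
Qed.

Definition mnm3 (x y z : nat) : 'X_{1..3} := [multinom [tuple x; y; z]].

Lemma ord3P (P : 'I_3 -> Prop) : P var0 -> P var1 -> P var2 -> forall i, P i.
Proof.
by move=> P0 P1 P2 [[|[|[|i]]] lti] //; rewrite (bool_irrelevance lti isT).
Qed.

Lemma mnm3E (m : 'X_{1..3}) : mnm3 (m var0) (m var1) (m var2) = m.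
Proof. by apply/mnmP; elim/ord3P. Qed.

Lemma mnm3_addU0 x y z : (mnm3 x y z + U_(var0))%MM = mnm3 x.+1 y z.
Proof. by apply/mnmP; elim/ord3P; rewrite mnmDE mnm1E /= ?addn0 ?addn1. Qed.
Lemma mnm3_addU1 x y z : (mnm3 x y z + U_(var1))%MM = mnm3 x y.+1 z.
Proof. by apply/mnmP; elim/ord3P; rewrite mnmDE mnm1E /= ?addn0 ?addn1. Qed.
Lemma mnm3_addU2 x y z : (mnm3 x y z + U_(var2))%MM = mnm3 x y z.+1.
Proof. by apply/mnmP; elim/ord3P; rewrite mnmDE mnm1E /= ?addn0 ?addn1. Qed.

Definition coef3 (p : Pol) (x y z : nat) : R := p@_(mnm3 x y z).

Lemma coef3ZD a p q x y z : coef3 (a *: p + q) x y z = a * coef3 p x y z + coef3 q x y z.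
Proof. by rewrite /coef3 mcoeffD mcoeffZ. Qed.

Lemma coef3D p q x y z : coef3 (p + q) x y z = coef3 p x y z + coef3 q x y z.
Proof. exact: mcoeffD. Qed.

Lemma coef3B p q x y z : coef3 (p - q) x y z = coef3 p x y z - coef3 q x y z.
Proof. exact: mcoeffB. Qed.

Lemma coef3Mn p k x y z : coef3 (p *+ k) x y z = coef3 p x y z *+ k.
Proof. exact: mcoeffMn. Qed.

Lemma coef3_mderiv0 p x y z : coef3 p^`M(var0) x y z = x.+1%:R * coef3 p x.+1 y z.
Proof. by rewrite /coef3 mcoeff_mderiv mnm3_addU0 mulr_natl. Qed.
Lemma coef3_mderiv1 p x y z : coef3 p^`M(var1) x y z = y.+1%:R * coef3 p x y.+1 z.
Proof. by rewrite /coef3 mcoeff_mderiv mnm3_addU1 mulr_natl. Qed.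
Lemma coef3_mderiv2 p x y z : coef3 p^`M(var2) x y z = z.+1%:R * coef3 p x y z.+1.
Proof. by rewrite /coef3 mcoeff_mderiv mnm3_addU2 mulr_natl. Qed.

Lemma mpoly3_eq0 p : (forall x y z, coef3 p x y z = 0) -> p = 0.
Proof. by move=> p0; apply/mpolyP=> m; rewrite mcoeff0 -[m]mnm3E; apply: p0. Qed.

Definition coefs (f : Pol * Pol * Pol) (x : nat) : slice R * slice R * slice R :=
  (coef3 f.1.1 x, coef3 f.1.2 x, coef3 f.2 x).

Lemma coef3_sandwich f x y z :
  let r := sandwich_rhs x (coefs f x) (coefs f x.+1) in
  [/\ coef3 (sandwich0 f) x y z = (x.+1 * x.+2)%:R * coef3 f.1.1 x.+2 y z - r.1.1 y z,
      coef3 (sandwich1 f) x y z = (x.+1 * x.+2)%:R * coef3 f.1.2 x.+2 y z - r.1.2 y z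
    & coef3 (sandwich2 f) x y z = (x.+1 * x.+2)%:R * coef3 f.2 x.+2 y z - r.2 y z].
Proof.
rewrite /sandwich0 /sandwich1 /sandwich2 !(coef3B, coef3D, coef3Mn).
rewrite !(coef3_mderiv0, coef3_mderiv1, coef3_mderiv2) !natrM.
rewrite /sandwich_rhs /coefs; cbn [fst snd].
by split; ring.
Qed.

Lemma sandwich_linear a (u v : Pol * Pol * Pol) :
  [/\ sandwich0 (a *: u + v) = a *: sandwich0 u + sandwich0 v,
      sandwich1 (a *: u + v) = a *: sandwich1 u + sandwich1 v
    & sandwich2 (a *: u + v) = a *: sandwich2 u + sandwich2 v].
Proof.
have -> : a *: u + v = (a *: u.1.1 + v.1.1, a *: u.1.2 + v.1.2, a *: u.2 + v.2) by [].
rewrite /sandwich0 /sandwich1 /sandwich2; cbn [fst snd].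
(* scalings become products with constants, so that [ring] applies *)
rewrite !(mderivD, mderivZ) -!mul_mpolyC.
by split; ring.
Qed.

Lemma InfrE n f : Infr n f <->
  [/\ f.1.1 \is n.-homog, f.1.2 \is n.-homog, f.2 \is n.-homog
    & [/\ sandwich0 f = 0, sandwich1 f = 0 & sandwich2 f = 0]].
Proof.
rewrite /Infr dbar_sandwichE; split=> -[-> -> -> E]; split=> //.
  by split; [apply: (congr1 (@q0 _) E) | apply: (congr1 (@q1 _) E)
    | apply: (congr1 (@q2 _) E)].
by case: E => -> -> ->.
Qed.

Lemma Infr_rec n f : Infr n f <->
  [/\ f.1.1 \is n.-homog, f.1.2 \is n.-homog, f.2 \is n.-homog
    & sandwich_rec (coefs f)].
Proof.
rewrite InfrE; split=> -[-> -> -> E]; split=> //.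
  case: E => E0 E1 E2 x y z; have [] := coef3_sandwich f x y z.
  rewrite E0 E1 E2 /coef3 !mcoeff0.
  by move=> /esym/subr0_eq ? /esym/subr0_eq ? /esym/subr0_eq ?.
split; apply: mpoly3_eq0 => x y z; have [c0 c1 c2] := coef3_sandwich f x y z;
  by have [e0 e1 e2] := E x y z; rewrite ?c0 ?c1 ?c2 ?e0 ?e1 ?e2 subrr.
Qed.

Lemma Infr_subspace n : is_subspace (Infr (R := R) n).
Proof.
split.
  apply/InfrE; rewrite /sandwich0 /sandwich1 /sandwich2 !mderiv0.
  by rewrite !(subrr, addr0, mul0rn, rpred0).
move=> a u v /InfrE[u0 u1 u2 [U0 U1 U2]] /InfrE[v0 v1 v2 [V0 V1 V2]].
have [W0 W1 W2] := sandwich_linear a u v.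
apply/InfrE; split; rewrite ?rpredD ?rpredZ //.
by rewrite W0 W1 W2 U0 U1 U2 V0 V1 V2 scaler0 addr0.
Qed.

Lemma mdeg_mnm3 x y z : mdeg (mnm3 x y z) = (x + y + z)%N.
Proof. by rewrite mdegE !big_ord_recl big_ord0 addn0 addnA. Qed.

Lemma coef3_homog n p x y z :
  p \is n.-homog -> (x + y + z != n)%N -> coef3 p x y z = 0.
Proof. by move=> hp; rewrite -mdeg_mnm3; apply: dhomog_nemf_coeff. Qed.

Definition hpoly n (a : nat -> slice R) : Pol :=
  \sum_(m : 'X_{1..3 < n.+1} | mdeg m == n) a (m var0) (m var1) (m var2) *: 'X_[m].

Lemma hpoly_homog n a : hpoly n a \is n.-homog.
Proof. by apply: rpred_sum => m hm; rewrite dhomogZ // dhomogX. Qed.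

Lemma coef3_hpoly n a x y z :
  coef3 (hpoly n a) x y z = if (x + y + z == n)%N then a x y z else 0.
Proof.
rewrite /coef3 /hpoly raddf_sum /= -mdeg_mnm3.
case: ifP => hm.
- have hb : (mdeg (mnm3 x y z) < n.+1)%N by rewrite (eqP hm).
  rewrite (bigD1 (BMultinom hb)) //= mcoeffZ mcoeffX eqxx mulr1 big1 ?addr0 //.
  move=> m /andP[_ ne]; rewrite mcoeffZ mcoeffX.
  case: eqP => [e|_]; last by rewrite mulr0.
  by rewrite (_ : m = BMultinom hb) ?eqxx // in ne; apply: val_inj.
- rewrite big1 // => m hm'; rewrite mcoeffZ mcoeffX.
  case: eqP => [e|_]; last by rewrite mulr0.
  by rewrite -e hm' in hm.
Qed.

Definition hpoly3 n (A : nat -> slice R * slice R * slice R) : Pol * Pol * Pol :=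
  (hpoly n (fun x => (A x).1.1), hpoly n (fun x => (A x).1.2), hpoly n (fun x => (A x).2)).

Lemma Infr_hpoly3 n A : sandwich_rec A -> Infr n (hpoly3 n A).
Proof.
move=> recA; apply/Infr_rec; split; try exact: hpoly_homog.
move=> x y z; rewrite /sandwich_rhs /coefs /hpoly3; cbn [fst snd].
rewrite !coef3_hpoly !addSn !addnS; case: eqP => _; first exact: recA.
by split; ring.
Qed.
End Sandwich.

Definition comp3 (T : Type) (t : T * T * T) (k : 'I_3) : T :=
  match val k with 0 => t.1.1 | 1 => t.1.2 | _ => t.2 end.

Section Basis.
Variables (R : reals.Real.type) (n : nat).
Local Notation Pol := {mpoly R[3]}.
Local Notation Idx := ('I_3 * ('I_n.+1 + 'I_n))%type.

Definition init_exp (j : 'I_n.+1 + 'I_n) : nat * nat * nat :=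
  match j with inl y => (0, val y, n - y) | inr y => (1, val y, n.-1 - y) end%N.

Lemma init_exp_inj : injective init_exp.
Proof.
by case=> -[y hy] [] -[y' hy'] //= [e] *; [congr inl | congr inr]; apply: val_inj.
Qed.

Lemma init_expP x y z :
  (x <= 1)%N /\ (x + y + z)%N = n <-> exists j, init_exp j = (x, y, z).
Proof.
split=> [[]|[[[y' hy']|[y' hy']] [<- <- <-]]]; rewrite /=; try lia.
case: x => [|[|//]] _ deg.
  have hy : (y < n.+1)%N by lia.
  by exists (inl (Ordinal hy)); congr (_, _, _); rewrite /=; lia.
have hy : (y < n)%N by lia.
by exists (inr (Ordinal hy)); congr (_, _, _); rewrite /=; lia.
Qed.

Definition coord (f : Pol * Pol * Pol) (i : Idx) : R :=
  let: (x, y, z) := init_exp i.2 in coef3 (comp3 f i.1) x y z.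

Definition delta_levels (i : Idx) (x : nat) : slice R * slice R * slice R :=
  let d k y z := ((k, (x, y, z)) == (i.1, init_exp i.2))%:R in
  (d var0, d var1, d var2).

Definition basis (i : Idx) : Pol * Pol * Pol :=
  hpoly3 n (sandwich_sol (delta_levels i 0) (delta_levels i 1)).

Lemma basis_Infr i : Infr n (basis i).
Proof. exact/Infr_hpoly3/sandwich_sol_rec. Qed.

Lemma coef3_basis i k x y z : (x <= 1)%N -> (x + y + z)%N = n ->
  coef3 (comp3 (basis i) k) x y z = ((k, (x, y, z)) == (i.1, init_exp i.2))%:R.
Proof.
move=> x1 deg; rewrite /basis /hpoly3.
by elim/ord3P: k; rewrite /comp3 /= coef3_hpoly deg eqxx; case: x x1 {deg} => [|[|]].
Qed.

Lemma coordZD a u v i : coord (a *: u + v) i = a * coord u i + coord v i.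
Proof.
rewrite /coord; case: (init_exp i.2) => -[x y] z.
by rewrite -coef3ZD; case: i => k j; elim/ord3P: k.
Qed.

Lemma coord_basis i i' : coord (basis i) i' = (i == i')%:R.
Proof.
case: i' => k j; rewrite /coord /=; case E: (init_exp j) => [[x y] z].
have [x1 deg] : (x <= 1)%N /\ (x + y + z)%N = n by apply/init_expP; exists j.
rewrite coef3_basis // -E [in RHS]eq_sym.
by case: i => k' j'; rewrite !xpair_eqE (inj_eq init_exp_inj).
Qed.

Lemma coord_inj f : Infr n f -> (forall i, coord f i = 0) -> f = 0.
Proof.
case: f => -[a b] c /Infr_rec[ha hb hc recf] coord_f0.
have low x y z k : (x <= 1)%N -> coef3 (comp3 (a, b, c) k) x y z = 0.
  move=> x1; have [deg|ndeg] := eqVneq (x + y + z)%N n.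
    have [j E] := iffLR (init_expP x y z) (conj x1 deg).
    by have := coord_f0 (k, j); rewrite /coord /= E.
  by apply: coef3_homog ndeg; elim/ord3P: k.
have low_vanishes x : (x <= 1)%N -> vanishes (coefs (a, b, c) x).
  by move=> x1; split=> y z;
    [apply: (low _ _ _ var0) | apply: (low _ _ _ var1) | apply: (low _ _ _ var2)].
have V := sandwich_rec_vanishes recf (low_vanishes 0%N isT) (low_vanishes 1%N isT).
have -> : (0 : Pol * Pol * Pol) = (0, 0, 0) by [].
by congr (_, _, _); apply: mpoly3_eq0 => x y z; have [V0 V1 V2] := V x;
  [apply: V0 | apply: V1 | apply: V2].
Qed.
End Basis.

Local Close Scope ring_scope.

Theorem theorem3p4 (R : reals.Real.type) (n : nat) :
  is_subspace (Infr (R := R) n) /\ has_dim (Infr (R := R) n) (6 * n + 3).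
Proof.
split; first exact: Infr_subspace.
have := dual_basis_has_dim (Infr_subspace R n) (@coordZD R n) (@coord_basis R n)
  (@basis_Infr R n) (@coord_inj R n).
by rewrite card_prod card_sum !card_ord (_ : 3 * (n.+1 + n) = 6 * n + 3); last lia.
Qed.
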